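(* In the setting where, for $i=1,\dots,n$, $f_i(x_i,\langle u,x_1,\dots,x_{i-1}\rangle)=\tanh(w_i x_i+\beta_i(u,x_1,\dots,x_{i-1}))$ with $w_i\ge0$ and $\beta_i$ continuous, fix $u\in U$, $i\in[n]$, $x_1,\dots,x_i\in\mathbb{R}$, and let $(x_{j,t})_{t\ge0}$ ($j\in[i]$) be defined by $x_{j,0}=x_j$, $x_{j,t}=f_j(x_{j,t-1},\langle u,x_{1,t-1},\dots,x_{j-1,t-1}\rangle)$. Let $x_{j,*}=\lim_{t\to\infty}x_{j,t}$ (which exists for every $j$). Then $x_{i,*}$ is a fixpoint of $h_{i,v}(x)=\tanh(w_i x+v)$, where $v=\beta_1(u)$ if $i=1$ and $v=\beta_i(u,x_{1,*},\dots,x_{i-1,*})$ if $i\ge2$.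
   Context: This concerns the sequence of states of the first $i$ neurons of an $\mathrm{RNC}_+$ (a cascade of recurrent tanh neurons with nonnegative recurrent weights $w_i$ and feedforward-network input functions $\beta_i$) when input $u$ is repeated. *)

From HB Require Import structures.
From mathcomp Require Import all_boot all_order all_algebra.
From mathcomp Require Import all_classical all_reals all_analysis.
Set Implicit Arguments. Unset Strict Implicit. Unset Printing Implicit Defensive.
Import Order.TTheory GRing.Theory Num.Theory.
Import numFieldNormedType.Exports.
Local Open Scope ring_scope.

Definition tanh {R : realType} (x : R) : R :=
  (expR x - expR (- x)) / (expR x + expR (- x)).

(* Neurons are indexed 0..n-1 (paper's neuron j+1 is our j). *)

Definition rnc_prefix {R : realType} {n : nat} (X : 'rV[R]_n) (j : 'I_n) : 'rV[R]_j :=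
  \row_(k < j) X 0 (widen_ord (ltnW (ltn_ord j)) k).

Definition rnc_step {R : realType} {U : Type} {n : nat} (w : 'I_n -> R)
  (beta : forall j : 'I_n, U -> 'rV[R]_j -> R) (u : U) (X : 'rV[R]_n) : 'rV[R]_n :=
  \row_(j < n) tanh (w j * X 0 j + beta j u (rnc_prefix X j)).

Definition rnc_traj {R : realType} {U : Type} {n : nat} (w : 'I_n -> R)
  (beta : forall j : 'I_n, U -> 'rV[R]_j -> R) (u : U) (x0 : 'rV[R]_n) (t : nat)
  : 'rV[R]_n := iter t (rnc_step w beta u) x0.

Local Open Scope classical_set_scope.
Definition rnc_lim {R : realType} {U : Type} {n : nat} (w : 'I_n -> R)
  (beta : forall j : 'I_n, U -> 'rV[R]_j -> R) (u : U) (x0 : 'rV[R]_n) (j : 'I_n) : R :=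
  lim ((fun t => rnc_traj w beta u x0 t 0 j) @ \oo).

From HB Require Import structures.
From mathcomp Require Import all_boot all_order all_algebra.
From mathcomp Require Import all_classical all_reals all_analysis.
From mathcomp Require Import lra ring.
Set Implicit Arguments. Unset Strict Implicit. Unset Printing Implicit Defensive.
Import Order.TTheory GRing.Theory Num.Theory.
Import numFieldNormedType.Exports.
Local Open Scope classical_set_scope.
Local Open Scope ring_scope.

(* Neuron j only sees its own past and neurons 0..j-1, so by induction on j
   the inputs v_t = beta_j(u, x_{0,t}, ..., x_{j-1,t}) converge to some v, and
   it suffices to study a scalar recurrence x_{t+1} = tanh (w x_t + v_t) with
   w >= 0 and v_t --> v.  Let l be its liminf.  The map h c = tanh (w c + v)
   is nondecreasing, so for c with c < h c (resp. h c < c) the region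
   {x >= c} (resp. {x <= c}) is eventually forward invariant; hence the
   sequence ends up on one side of every non-fixpoint c of h.  Fixpoints of h
   contain no three equally spaced points unless the middle one is 0, so every
   interval (l, l + e) contains a non-fixpoint, which forces limsup <= l.  The
   limit l is then a fixpoint of h by continuity. *)

Section Tanh.
Variable R : realType.
Implicit Types a b c d m v w y : R.

Lemma tanhE y : tanh y = 1 - 2 / (expR y ^+ 2 + 1).
Proof.
rewrite /tanh expRN.
have ey := expR_gt0 y.
have h1 : expR y ^+ 2 + 1 != 0 by rewrite lt0r_neq0 // addr_gt0 // exprn_gt0.
have h2 : expR y + (expR y)^-1 != 0 by rewrite lt0r_neq0 // addr_gt0 // invr_gt0.
by field; rewrite h1 /= lt0r_neq0.
Qed.

Lemma ler_tanh : {homo @tanh R : a b / a <= b}.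
Proof.
move=> a b ab; rewrite !tanhE lerD2l lerN2.
rewrite ler_pdivrMr ?addr_gt0 ?exprn_gt0 ?expR_gt0 //.
rewrite mulrAC ler_pdivlMr ?addr_gt0 ?exprn_gt0 ?expR_gt0 //.
by rewrite ler_pM2l // lerD2r lerXn2r ?nnegrE ?expR_ge0 // ler_expR.
Qed.

Lemma tanh_le1 y : tanh y <= 1.
Proof. by rewrite tanhE lerBlDr lerDl divr_ge0 // addr_ge0 // exprn_ge0 // expR_ge0. Qed.

Lemma tanh_geN1 y : -1 <= tanh y.
Proof.
have e2 : 0 <= expR y ^+ 2 by rewrite exprn_ge0 // expR_ge0.
rewrite tanhE lerBrDl lerBlDr ler_pdivrMr; last by rewrite ltr_wpDl.
lra.
Qed.

Lemma continuous_tanh : continuous (@tanh R).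
Proof.
move=> y; rewrite /tanh.
have cN : continuous (fun y : R => expR (- y)).
  by move=> z; apply: continuous_comp; [exact: opp_continuous|exact: continuous_expR].
apply: cvgM; first by apply: cvgB; [exact: continuous_expR|exact: cN].
apply: cvgV; last by apply: cvgD; [exact: continuous_expR|exact: cN].
by rewrite lt0r_neq0 // addr_gt0 // expR_gt0.
Qed.

Lemma tanh_expR2 y : 1 + tanh y = (1 - tanh y) * expR y ^+ 2.
Proof.
have h1 : expR y ^+ 2 + 1 != 0 by rewrite lt0r_neq0 // addr_gt0 // exprn_gt0 // expR_gt0.
by rewrite tanhE; field.
Qed.

(* By [tanh_expR2], (1 + c) / (1 - c) = e^(2 (w c + v)) at a fixpoint c, and the
   right-hand side is geometric along an arithmetic progression of c's. *)
Lemma tanh_equispaced_fixpoints w v m d : d != 0 ->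
  tanh (w * (m - d) + v) = m - d -> tanh (w * m + v) = m ->
  tanh (w * (m + d) + v) = m + d -> m = 0.
Proof.
move=> d0 fxl fxm fxr.
have := tanh_expR2 (w * (m - d) + v); have := tanh_expR2 (w * m + v).
have := tanh_expR2 (w * (m + d) + v); rewrite fxl fxm fxr => er em el.
have E : expR (w * (m - d) + v) * expR (w * (m + d) + v) = expR (w * m + v) ^+ 2.
  by rewrite -expRD expr2 -expRD; congr expR; ring.
have K : (1 + m) ^+ 2 * ((1 - (m - d)) * (1 - (m + d)))
       = (1 - m) ^+ 2 * ((1 + (m - d)) * (1 + (m + d))).
  by rewrite em el er -E; ring.
have : 4 * m * (d * d) = (1 - m) ^+ 2 * ((1 + (m - d)) * (1 + (m + d)))
   - (1 + m) ^+ 2 * ((1 - (m - d)) * (1 - (m + d))) by ring.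
rewrite K subrr => /eqP.
by rewrite !mulf_eq0 (negbTE d0) pnatr_eq0 /= !orbF => /eqP.
Qed.

Lemma exists_nonfixpoint w v a b : a < b ->
  exists2 c, a < c < b & tanh (w * c + v) != c.
Proof.
move=> ab; apply: contrapT => nf.
have fx c : a < c < b -> tanh (w * c + v) = c.
  by move=> hc; apply: contrapT => ne; apply: nf; exists c => //; exact/eqP.
set d := (b - a) / 5.
have d0 : 0 < d by rewrite divr_gt0 // subr_gt0.
have mid k : 1 < k < 4 -> a + k * d = 0.
  move=> /andP[k1 k4]; apply: (tanh_equispaced_fixpoints (lt0r_neq0 d0));
    apply: fx; rewrite /d; apply/andP; split; nra.
have := mid 2; have := mid 3; lra.
Qed.

End Tanh.

Lemma forward_invariant_dichotomy (P : nat -> Prop) (T : nat) :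
  (forall t, (T <= t)%N -> P t -> P t.+1) ->
  (exists N, forall t, (N <= t)%N -> P t) \/
  (exists N, forall t, (N <= t)%N -> ~ P t).
Proof.
move=> PS; have [[t0 Tt0 Pt0]|never] := pselect (exists2 t, (T <= t)%N & P t).
  left; exists t0 => t /subnK <-; elim: (t - t0)%N => [//|k IH].
  by rewrite addSn; apply: PS IH; rewrite (leq_trans Tt0) ?leq_addl.
by right; exists T => t Tt Pt; apply: never; exists t.
Qed.

Section TanhRecurrence.
Variables (R : realType) (w v : R) (x vt : nat -> R).
Hypothesis w_ge0 : 0 <= w.
Hypothesis vt_cvg : vt @ \oo --> v.
Hypothesis xS : forall t, x t.+1 = tanh (w * x t + vt t).

Lemma cvg_tanh_input c : (fun t => tanh (w * c + vt t)) @ \oo --> tanh (w * c + v).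
Proof.
apply: (continuous_cvg _ (@continuous_tanh R _)).
by apply: cvgD; [exact: cvg_cst|exact: vt_cvg].
Qed.

Lemma recurrence_one_side c : tanh (w * c + v) != c ->
  (exists N, forall t, (N <= t)%N -> c <= x t) \/
  (exists N, forall t, (N <= t)%N -> x t <= c).
Proof.
have ler_step t a b : a <= b -> tanh (w * a + vt t) <= tanh (w * b + vt t).
  by move=> ab; rewrite ler_tanh // lerD2r ler_wpM2l.
rewrite neq_lt => /orP[hc|hc].
- move: (@cvg_tanh_input c) => /cvgr_lt/(_ _ hc) [T _ HT].
  have := @forward_invariant_dichotomy (fun t => x t <= c) T.
  case=> [t Tt xt|[N HN]|[N HN]]; [|by right; exists N|left; exists N].
    by rewrite xS; apply: (le_trans _ (ltW (HT t Tt))); exact: ler_step.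
  by move=> t /HN /negP; rewrite -ltNge => /ltW.
- move: (@cvg_tanh_input c) => /cvgr_gt/(_ _ hc) [T _ HT].
  have := @forward_invariant_dichotomy (fun t => c <= x t) T.
  case=> [t Tt ct|[N HN]|[N HN]]; [|by left; exists N|right; exists N].
    by rewrite xS; apply: (le_trans (ltW (HT t Tt))); exact: ler_step.
  by move=> t /HN /negP; rewrite -ltNge => /ltW.
Qed.

Let lower_bounds := [set c | exists N, forall t, (N <= t)%N -> c <= x t].
Let liminf := sup lower_bounds.

Lemma has_sup_lower_bounds : has_sup lower_bounds.
Proof.
have xb t : -1 <= x t.+1 <= 1 by rewrite xS tanh_geN1 tanh_le1.
split; first by exists (-1), 1%N => -[//|t _]; case/andP: (xb t).
exists 1 => c [N HN]; apply: (le_trans (HN N.+1 (leqnSn N))).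
by case/andP: (xb N).
Qed.

Lemma eventually_gt_liminf e : 0 < e ->
  exists N, forall t, (N <= t)%N -> liminf - e < x t.
Proof.
move=> e0; have [c [N HN] lc] := sup_adherent e0 has_sup_lower_bounds.
by exists N => t Nt; exact: lt_le_trans lc (HN t Nt).
Qed.

Lemma eventually_lt_liminf e : 0 < e ->
  exists N, forall t, (N <= t)%N -> x t < liminf + e.
Proof.
move=> e0; apply: contrapT => never.
have often N : exists2 t, (N <= t)%N & liminf + e <= x t.
  apply: contrapT => nf; apply: never; exists N => t Nt.
  by rewrite ltNge; apply/negP => le; apply: nf; exists t.
have le : liminf < liminf + e by rewrite ltrDl.
have [c /andP[lc ce] nfc] := exists_nonfixpoint w v le.
have [[N HN]|[N HN]] := recurrence_one_side nfc.
- have : c <= liminf by apply: sup_upper_bound has_sup_lower_bounds _ _; exists N.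
  lra.
- by have [t /HN] := often N; lra.
Qed.

Lemma cvg_liminf : x @ \oo --> liminf.
Proof.
apply/cvgrPdist_lt => e e0.
have [N1 H1] := eventually_gt_liminf e0; have [N2 H2] := eventually_lt_liminf e0.
near=> t; have : (maxn N1 N2 <= t)%N by near: t; exists (maxn N1 N2).
by rewrite geq_max ltr_distlC => /andP[/H1 -> /H2 ->].
Unshelve. all: by end_near.
Qed.

Lemma cvg_tanh_recurrence : exists2 l, x @ \oo --> l & l = tanh (w * l + v).
Proof.
exists liminf; first exact: cvg_liminf.
have xS_to_fixpoint : (fun t => x t.+1) @ \oo --> tanh (w * liminf + v).
  under eq_fun do rewrite xS.
  apply: (continuous_cvg _ (@continuous_tanh R _)).
  by apply: cvgD; [apply: cvgMr; exact: cvg_liminf|exact: vt_cvg].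
have xS_to_liminf : (fun t => x t.+1) @ \oo --> liminf.
  by rewrite cvg_shiftS; exact: cvg_liminf.
exact: cvg_unique xS_to_liminf xS_to_fixpoint.
Qed.

End TanhRecurrence.

Lemma cvg_mx_entrywise (T : puniformType) (I : Type) (F : set_system I)
    (FF : Filter F) m n (M : I -> 'M[T]_(m, n)) (L : 'M[T]_(m, n)) :
  (forall i j, (fun t => M t i j) @ F --> L i j) -> M @ F --> L.
Proof.
move=> ML; apply/cvg_mx_entourageP => A entA.
apply: filter_forall => i; apply: filter_forall => j.
move: (ML i j) => /cvg_entourageP/(_ A entA).
by rewrite !near_map; apply: filterS => t; rewrite inE.
Qed.

Section Cascade.
Variables (R : realType) (U : topologicalType) (n : nat) (w : 'I_n -> R).
Variable beta : forall j : 'I_n, U -> 'rV[R]_j -> R.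
Arguments beta : clear implicits.
Hypothesis w_ge0 : forall j, 0 <= w j.
Hypothesis beta_cont :
  forall j : 'I_n, continuous (fun p : U * 'rV[R]_j => beta j p.1 p.2).
Variables (u : U) (x0 : 'rV[R]_n).

Local Notation X t := (rnc_traj w beta u x0 t).
Local Notation x j := (fun t => rnc_traj w beta u x0 t 0 j).
Local Notation xlim := (\row_(j < n) rnc_lim w beta u x0 j).

Lemma rnc_trajS t j :
  X t.+1 0 j = tanh (w j * X t 0 j + beta j u (rnc_prefix (X t) j)).
Proof. by rewrite /rnc_traj iterS /rnc_step mxE. Qed.

Lemma cvg_rnc_prefix (j : 'I_n) :
  (forall m : 'I_n, (m < j)%N -> x m @ \oo --> rnc_lim w beta u x0 m) ->
  (fun t => rnc_prefix (X t) j) @ \oo --> rnc_prefix xlim j.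
Proof.
move=> xm_cvg; apply: cvg_mx_entrywise => i k.
have -> : (fun t => rnc_prefix (X t) j i k) = x (widen_ord (ltnW (ltn_ord j)) k).
  by apply/funext => t; rewrite mxE.
by rewrite !mxE; apply: xm_cvg; rewrite /= ltn_ord.
Qed.

Lemma cvg_rnc_neuron (j : 'I_n) :
  (forall m : 'I_n, (m < j)%N -> x m @ \oo --> rnc_lim w beta u x0 m) ->
  x j @ \oo --> rnc_lim w beta u x0 j /\
  rnc_lim w beta u x0 j =
    tanh (w j * rnc_lim w beta u x0 j + beta j u (rnc_prefix xlim j)).
Proof.
move=> xm_cvg.
have input_cvg : (fun t => beta j u (rnc_prefix (X t) j)) @ \oo -->
                 beta j u (rnc_prefix xlim j).
  have pair_cvg : (fun t => (u, rnc_prefix (X t) j)) @ \oo --> (u, rnc_prefix xlim j).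
    exact: cvg_pair (cvg_cst u) (cvg_rnc_prefix xm_cvg).
  exact: (continuous_cvg _ (@beta_cont j _) pair_cvg).
have [l xj_cvg l_fix] := cvg_tanh_recurrence (w_ge0 j) input_cvg (rnc_trajS ^~ j).
by rewrite /rnc_lim (cvg_lim _ xj_cvg).
Qed.

Lemma cvg_rnc_traj (j : 'I_n) : x j @ \oo --> rnc_lim w beta u x0 j.
Proof.
have [k jk] := ubnP j; elim: k j jk => // k IH j jk.
by apply: (cvg_rnc_neuron _).1 => m mj; apply: IH; exact: leq_trans mj jk.
Qed.

End Cascade.

Theorem proposition5 (R : realType) (U : topologicalType) (n : nat)
  (w : 'I_n -> R) (beta : forall j : 'I_n, U -> 'rV[R]_j -> R) :
  (forall j : 'I_n, 0 <= w j) ->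
  (forall j : 'I_n, continuous (fun p : U * 'rV[R]_j => beta j p.1 p.2)) ->
  forall (u : U) (i : 'I_n) (x0 : 'rV[R]_n),
    (forall j : 'I_n, (j <= i)%N ->
       cvg ((fun t => rnc_traj w beta u x0 t 0 j) @ \oo)) /\
    rnc_lim w beta u x0 i =
      tanh (w i * rnc_lim w beta u x0 i
            + beta i u (rnc_prefix (\row_(j < n) rnc_lim w beta u x0 j) i)).
Proof.
move=> w_ge0 beta_cont u i x0.
have traj_cvg m := cvg_rnc_traj w_ge0 beta_cont (u := u) (x0 := x0) (j := m).
split=> [j _|]; first by apply/cvg_ex; exists (rnc_lim w beta u x0 j).
exact: (cvg_rnc_neuron w_ge0 beta_cont (fun m _ => traj_cvg m)).2.
Qed.
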